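(* Let $G$ be an undirected graph with at least one edge. For every integer $k\ge 1$, $$\Big(1-\frac1k\Big)\,\mathsf{OPT}\;\le\;\mathsf{OPT}_k\;\le\;1-\frac1k .$$
   Context: Let $G=(V,E)$ be a finite simple undirected graph with $n=|V|$ nodes and $m=|E|\ge1$ edges, let $d_v$ be the degree of $v$, and let $a_{u,v}=1$ if $\{u,v\}\in E$ and $a_{u,v}=0$ otherwise. For $C\subseteq V$ the modularity of $C$ is $\mathsf M(C)=\frac{1}{2m}\sum_{u\in C}\sum_{v\in C}\big(a_{u,v}-\frac{d_ud_v}{2m}\big)$, the sum ranging over all ordered pairs $(u,v)$ of nodes of $C$, including $u=v$. A clustering is a partition $\mathcal S$ of $V$ into nonempty sets (clusters); its modularity is $\mathsf M(\mathcal S)=\sum_{C\in\mathcal S}\mathsf M(C)$. $\mathsf{OPT}$ is the maximum of $\mathsf M(\mathcal S)$ over all clusterings, and $\mathsf{OPT}_k$ is the maximum of $\mathsf M(\mathcal S)$ over clusterings with at most $k$ clusters. *)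

From HB Require Import structures.
From mathcomp Require Import all_boot all_order all_algebra.
Set Implicit Arguments. Unset Strict Implicit. Unset Printing Implicit Defensive.
Import Order.TTheory GRing.Theory Num.Theory.
Local Open Scope ring_scope.

Definition simple_graph (T : finType) (e : rel T) : Prop :=
  symmetric e /\ irreflexive e.

Definition deg (T : finType) (e : rel T) (v : T) : nat := #|[set u | e v u]|.

Definition twom (T : finType) (e : rel T) : nat := (\sum_(v : T) deg e v)%N.

Definition adj (R : pzRingType) (T : finType) (e : rel T) (u v : T) : R :=
  (e u v)%:R.

Definition modC (R : fieldType) (T : finType) (e : rel T) (C : {set T}) : R :=
  (twom e)%:R^-1 *
  \sum_(u in C) \sum_(v in C)
     (adj R e u v - ((deg e u)%:R * (deg e v)%:R) / (twom e)%:R).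

Definition modS (R : fieldType) (T : finType) (e : rel T) (S : {set {set T}}) : R :=
  \sum_(C in S) modC R e C.

Definition clustering (T : finType) (S : {set {set T}}) : bool :=
  partition S [set: T].

(* The default value of
   the big max is the modularity of the trivial clustering {V}, which is itself
   a clustering with 1 <= k clusters whenever V is nonempty, so this is the max. *)
Definition OPTk (R : realFieldType) (T : finType) (e : rel T) (k : nat) : R :=
  \big[Num.max/modS R e [set [set: T]]]_(S : {set {set T}} |
      clustering S && (#|S| <= k)%N) modS R e S.

Definition OPT (R : realFieldType) (T : finType) (e : rel T) : R :=
  \big[Num.max/modS R e [set [set: T]]]_(S : {set {set T}} | clustering S)
     modS R e S.

(* Lower bound: merge the clusters of any clustering S by colouring them uniformly at random
   with k colours.  Two vertices of the same cluster always stay together, two vertices of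
   different clusters are merged with probability 1/k, and the entries a_uv - d_u d_v / 2m of
   the modularity matrix sum to 0, so the expected modularity is (1 - 1/k) M(S); some colouring
   does at least as well, and it has at most k clusters.
   Upper bound: M(S) is the fraction of edge ends inside clusters (at most 1) minus the sum of
   the squared volume fractions of the clusters, which sum to 1; by Cauchy-Schwarz that sum of
   squares is at least 1/|S| >= 1/k. *)
From HB Require Import structures.
From mathcomp Require Import all_boot all_order all_algebra.
Import Order.TTheory GRing.Theory Num.Theory.
Local Open Scope ring_scope.
Set Implicit Arguments. Unset Strict Implicit.

Lemma sum_blocks_pblock (V : nmodType) (T : finType) (P : {set {set T}})
    (F : T -> T -> V) : partition P [set: T] ->
  \sum_(C in P) \sum_(u in C) \sum_(v in C) F u v =
  \sum_u \sum_v (if pblock P u == pblock P v then F u v else 0).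
Proof.
case/and3P=> /eqP coverP trivP _.
have -> : \sum_u \sum_v (if pblock P u == pblock P v then F u v else 0)
    = \sum_(u in cover P) \sum_(v in pblock P u) F u v.
  rewrite coverP; apply: eq_big => [u|u _]; first by rewrite inE.
  rewrite [RHS]big_mkcond; apply: eq_bigr => v _.
  by rewrite eq_pblock ?coverP ?inE.
rewrite big_trivIset //; apply: eq_bigr => C PC; apply: eq_bigr => u uC.
by rewrite (def_pblock trivP PC uC).
Qed.

Lemma prodnD2 (I : finType) (X Y : I) (F : I -> nat) : X != Y ->
  (\prod_i F i = F X * F Y * \prod_(i | (i != X) && (i != Y)) F i)%N.
Proof.
move=> neqXY; rewrite (bigD1 X) //= (bigD1 Y) /=; last by rewrite eq_sym.
by rewrite mulnA; congr (_ * _)%N; apply: eq_bigl => i; rewrite andbC.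
Qed.

(* The functions with f X = f Y are counted as \sum_a \prod_i [f i = a if i \in {X, Y}],
   which factors over the coordinates by bigA_distr_bigA. *)
Lemma card_ffun_eq2 (I J : finType) (X Y : I) : X != Y ->
  ((\sum_(f : {ffun I -> J}) (f X == f Y)) * #|J| = #|{ffun I -> J}|)%N.
Proof.
move=> neqXY; have neqYX : (Y == X) = false by rewrite eq_sym (negbTE neqXY).
pose G (a : J) (i : I) (j : J) : nat :=
  if (i == X) || (i == Y) then nat_of_bool (j == a) else 1%N.
have eqXY_sum (f : {ffun I -> J}) : nat_of_bool (f X == f Y) = (\sum_a \prod_i G a i (f i))%N.
  rewrite (bigD1 (f X)) //= [X in (_ + X)%N]big1 => [|a neq_a].
    rewrite (prodnD2 _ neqXY) /G !eqxx neqYX /= big1 => [|i /andP[/negbTE-> /negbTE->]//].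
    by rewrite addn0 muln1 mul1n eq_sym.
  by rewrite (prodnD2 _ neqXY) /G !eqxx /= eq_sym (negbTE neq_a).
have sum_G a : (\sum_(f : {ffun I -> J}) \prod_i G a i (f i) =
    \prod_(i | (i != X) && (i != Y)) #|J|)%N.
  rewrite -(bigA_distr_bigA (G a)) (prodnD2 _ neqXY) /G !eqxx neqYX /=.
  have one_a : (\sum_(j : J) (j == a) = 1)%N.
    by rewrite (bigD1 a) //= big1 ?eqxx // => j /negbTE ->.
  rewrite one_a !mul1n; apply: eq_bigr => i /andP[/negbTE -> /negbTE ->].
  by rewrite sum1_card.
rewrite (eq_bigr _ (fun f _ => eqXY_sum f)) exchange_big /=.
rewrite (eq_bigr _ (fun a _ => sum_G a)) sum_nat_const.
by rewrite card_ffun -prod_nat_const (prodnD2 _ neqXY) mulnAC.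
Qed.

Lemma sum_ffun_eq2 (R : numFieldType) (I J : finType) (X Y : I) : (0 < #|J|)%N ->
  \sum_(f : {ffun I -> J}) ((f X == f Y)%:R : R) =
  #|{ffun I -> J}|%:R / (if X == Y then 1 else #|J|%:R).
Proof.
move=> J_gt0; case: eqVneq => [<-|neqXY].
  by rewrite divr1 -sum1_card natr_sum; apply: eq_bigr => f _; rewrite eqxx.
by rewrite -(card_ffun_eq2 J neqXY) natrM mulfK ?pnatr_eq0 -?lt0n // natr_sum.
Qed.

(* Cauchy-Schwarz for weights summing to 1, via 0 <= \sum_i (x i - 1/|A|)^2. *)
Lemma inv_card_le_sum_sqr (R : realFieldType) (I : finType) (A : {set I})
    (x : I -> R) : (0 < #|A|)%N -> \sum_(i in A) x i = 1 ->
  #|A|%:R^-1 <= \sum_(i in A) x i ^+ 2.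
Proof.
move=> A_gt0 sum_x; set c : R := #|A|%:R^-1.
have nA_neq0 : #|A|%:R != 0 :> R by rewrite pnatr_eq0 -lt0n.
have : 0 <= \sum_(i in A) (x i - c) ^+ 2 by apply: sumr_ge0 => i _; apply: sqr_ge0.
rewrite (eq_bigr _ (fun i _ => sqrrB (x i) c)) big_split /= sumrB sumr_const.
have -> : \sum_(i in A) x i * c *+ 2 = c *+ 2 by rewrite sumrMnl -mulr_suml sum_x mul1r.
have -> : c ^+ 2 *+ #|A| = c by rewrite -mulr_natr expr2 -mulrA mulVf // mulr1.
by rewrite mulr2n opprD addrA subrK subr_ge0.
Qed.

Section Modularity.

Variables (R : realFieldType) (T : finType) (e : rel T).
Hypothesis twom_gt0 : (0 < twom e)%N.

Local Notation w := ((twom e)%:R : R).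

Lemma twom_neq0 : w != 0.
Proof. by rewrite pnatr_eq0 -lt0n. Qed.

Lemma card_vertices_gt0 : (0 < #|T|)%N.
Proof.
move: twom_gt0; rewrite /twom; case: (pickP (fun _ : T => true)) => [u _ _|T0].
  by apply/card_gt0P; exists u.
by rewrite big_pred0.
Qed.

Lemma clustering_setT : clustering [set [set: T]].
Proof.
have [u _] := card_gt0P card_vertices_gt0.
rewrite /clustering /partition cover1 eqxx trivIset1 /= inE.
by apply/eqP => /setP /(_ u); rewrite !inE.
Qed.

Definition modB (u v : T) : R :=
  adj R e u v - (deg e u)%:R * (deg e v)%:R / w.

Lemma modS_pblock (P : {set {set T}}) : partition P [set: T] ->
  modS R e P =
  w^-1 * \sum_u \sum_v (if pblock P u == pblock P v then modB u v else 0).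
Proof. by move=> partP; rewrite /modS /modC -mulr_sumr (sum_blocks_pblock _ partP). Qed.

Lemma sum_adj : \sum_u \sum_v adj R e u v = w.
Proof.
rewrite /twom natr_sum; apply: eq_bigr => u _.
rewrite /deg -sum1_card natr_sum [RHS]big_mkcond /=; apply: eq_bigr => v _.
by rewrite inE /adj; case: (e u v).
Qed.

Lemma sum_modB : \sum_u \sum_v modB u v = 0.
Proof.
under eq_bigr => u _ do rewrite sumrB.
rewrite sumrB sum_adj.
have -> : \sum_u \sum_v ((deg e u)%:R * (deg e v)%:R / w)
    = (\sum_u (deg e u)%:R) * (\sum_v (deg e v)%:R) / w.
  rewrite !mulr_suml; apply: eq_bigr => u _.
  by rewrite mulr_sumr mulr_suml.
by rewrite -natr_sum mulfK ?twom_neq0 // subrr.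
Qed.

Lemma modS_preim_le_OPTk (k : nat) (g : T -> 'I_k) :
  w^-1 * \sum_u \sum_v (if g u == g v then modB u v else 0) <= OPTk R e k.
Proof.
pose P := preim_partition g [set: T].
have partP : partition P [set: T] by apply: preim_partitionP.
have card_P : (#|P| <= k)%N.
  pose fiber (a : 'I_k) := [set y in [set: T] | a == g y].
  apply: (@leq_trans #|fiber @: [set: 'I_k]|); last first.
    by apply: leq_trans (leq_imset_card _ _) _; rewrite cardsT card_ord.
  apply: subset_leq_card; apply/subsetP => C /imsetP [x _ ->].
  by apply/imsetP; exists (g x).
have pblockE u v : (pblock P u == pblock P v) = (g u == g v).
  case/and3P: partP => /eqP coverP trivP _.
  rewrite eq_pblock // ?coverP ?inE //.
  rewrite (@pblock_equivalence_partition _ (fun x y => g x == g y)) ?inE //.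
  by split=> // /eqP->.
have := @le_bigmax_cond _ R _ (modS R e [set [set: T]]) P
  (fun S : {set {set T}} => clustering S && (#|S| <= k)%N) (modS R e).
rewrite /OPTk /clustering partP card_P => /(_ isT).
rewrite (modS_pblock partP).
by under eq_bigr => u _ do under eq_bigr => v _ do rewrite pblockE.
Qed.

(* Averaging over colourings: a pair of vertices in distinct blocks of S receives the same
   colour for exactly a 1/k fraction of them. *)
Lemma sum_colourings (k : nat) (S : {set {set T}}) : (0 < k)%N ->
  let N := #|{ffun {set T} -> 'I_k}|%:R in
  \sum_(f : {ffun {set T} -> 'I_k})
    \sum_u \sum_v (if f (pblock S u) == f (pblock S v) then modB u v else 0) =
  N * (1 - k%:R^-1) *
    \sum_u \sum_v (if pblock S u == pblock S v then modB u v else 0).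
Proof.
move=> k_gt0 N.
have pair_weight u v :
    \sum_(f : {ffun {set T} -> 'I_k})
      (if f (pblock S u) == f (pblock S v) then modB u v else 0) =
    modB u v * (N / k%:R) +
    (if pblock S u == pblock S v then modB u v else 0) * (N * (1 - k%:R^-1)).
  under eq_bigr => f _ do rewrite -mulrb -mulr_natr.
  rewrite -mulr_sumr sum_ffun_eq2 ?card_ord // /N.
  case: eqVneq => _ /=; last by rewrite mul0r addr0.
  by rewrite divr1 mulrBr mulr1 -mulrDr addrC subrK.
rewrite exchange_big; under eq_bigr => u _ do rewrite exchange_big.
under eq_bigr => u _ do under eq_bigr => v _ do rewrite pair_weight.
under eq_bigr => u _ do rewrite big_split /=.
have sum2_mulr (F : T -> T -> R) a :
    \sum_u \sum_v F u v * a = (\sum_u \sum_v F u v) * a.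
  by rewrite mulr_suml; apply: eq_bigr => u _; rewrite mulr_suml.
by rewrite big_split /= !sum2_mulr sum_modB mul0r add0r mulrC.
Qed.

Lemma modS_merge_le_OPTk (k : nat) (S : {set {set T}}) : (0 < k)%N ->
  clustering S -> (1 - k%:R^-1) * modS R e S <= OPTk R e k.
Proof.
move=> k_gt0 clS; set N := #|{ffun {set T} -> 'I_k}|.
have N_gt0 : 0 < N%:R :> R by rewrite ltr0n /N card_ffun card_ord expn_gt0 k_gt0.
rewrite -(ler_pM2l N_gt0) (modS_pblock clS) mulrA mulrCA.
rewrite -(sum_colourings _ k_gt0) mulr_sumr.
have := @ler_sum _ _ (index_enum _) predT _ _ (fun (f : {ffun {set T} -> 'I_k}) _ =>
  modS_preim_le_OPTk (fun u => f (pblock S u))).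
by rewrite sumr_const mulr_natl.
Qed.

Lemma modC_volume (C : {set T}) :
  modC R e C = w^-1 * \sum_(u in C) \sum_(v in C) adj R e u v
               - ((\sum_(u in C) (deg e u)%:R) / w) ^+ 2.
Proof.
rewrite /modC (eq_bigr _ (fun u _ => sumrB _ _ _ _)) sumrB mulrBr; congr (_ - _).
set D := \sum_(u in C) (deg e u)%:R.
have -> : \sum_(u in C) \sum_(v in C) ((deg e u)%:R * (deg e v)%:R / w) = D * D / w.
  by rewrite !mulr_suml; apply: eq_bigr => u _; rewrite mulr_sumr mulr_suml.
by rewrite expr2 !mulrA [w^-1 * D]mulrC.
Qed.

Lemma card_clustering_gt0 (S : {set {set T}}) : clustering S -> (0 < #|S|)%N.
Proof.
case/and3P=> /eqP coverS _ _; have [u _] := card_gt0P card_vertices_gt0.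
by apply/card_gt0P; exists (pblock S u); apply: pblock_mem; rewrite coverS.
Qed.

Lemma modS_le_inv_card (S : {set {set T}}) : clustering S ->
  modS R e S <= 1 - #|S|%:R^-1.
Proof.
move=> clS; have /and3P[/eqP coverS trivS _] := clS.
have w_gt0 : 0 < w by rewrite ltr0n.
pose vol (C : {set T}) := (\sum_(u in C) (deg e u)%:R) / w.
have intra_le1 : w^-1 * \sum_(C in S) \sum_(u in C) \sum_(v in C) adj R e u v <= 1.
  rewrite (sum_blocks_pblock _ clS) ler_pdivrMl // mulr1 -[leRHS]sum_adj.
  apply: ler_sum => u _; apply: ler_sum => v _.
  by case: ifP => _ //; rewrite /adj ler0n.
have sum_vol : \sum_(C in S) vol C = 1.
  rewrite -mulr_suml -big_trivIset // coverS.
  have -> : \sum_(u in [set: T]) (deg e u)%:R = w.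
    by rewrite /twom natr_sum; apply: eq_bigl => u; rewrite inE.
  by rewrite mulfV ?twom_neq0.
rewrite /modS (eq_bigr _ (fun C _ => modC_volume C)) sumrB -mulr_sumr.
exact: lerB intra_le1 (inv_card_le_sum_sqr (card_clustering_gt0 clS) sum_vol).
Qed.

Lemma OPTk_le (k : nat) : (0 < k)%N -> OPTk R e k <= 1 - k%:R^-1.
Proof.
move=> k_gt0.
have modS_le S : clustering S -> (#|S| <= k)%N -> modS R e S <= 1 - k%:R^-1.
  move=> clS card_S; apply: le_trans (modS_le_inv_card clS) _.
  by rewrite lerD2l lerN2 lef_pV2 ?ler_nat // posrE ltr0n ?card_clustering_gt0.
apply: bigmax_le; first by apply: modS_le clustering_setT _; rewrite cards1.
by move=> S /andP[clS card_S]; apply: modS_le.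
Qed.

Lemma OPT_scale_le_OPTk (k : nat) : (0 < k)%N ->
  (1 - k%:R^-1) * OPT R e <= OPTk R e k.
Proof.
move=> k_gt0; rewrite /OPT.
apply: (big_ind (fun y => (1 - k%:R^-1) * y <= OPTk R e k)).
- exact: modS_merge_le_OPTk k_gt0 clustering_setT.
- by move=> x y hx hy; rewrite /Order.max; case: ifP.
- by move=> S clS; apply: modS_merge_le_OPTk.
Qed.

End Modularity.

Theorem lemma1 (R : realFieldType) (T : finType) (e : rel T)
  (hG : simple_graph e) (hE : exists u v, e u v) (k : nat) (hk : (1 <= k)%N) :
  (1 - k%:R^-1) * OPT R e <= OPTk R e k /\ OPTk R e k <= 1 - k%:R^-1.
Proof.
have [u [v e_uv]] := hE.
have twom_gt0 : (0 < twom e)%N.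
  rewrite /twom (bigD1 u) //= ltn_addr //; apply/card_gt0P.
  by exists v; rewrite inE.
by split; [apply: OPT_scale_le_OPTk | apply: OPTk_le].
Qed.
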